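(* Let $\mathcal{S}$ be a reduced LLD subspace of $\mathcal{L}(U,V)$, and let $c$ be the greatest integer for which $\mathcal{S}$ is $c$-LLD. Then $\widehat{\mathcal{S}}$ is semi-primitive if and only if $\mathcal{S}$ is minimal among the $c$-LLD subspaces of $\mathcal{L}(U,V)$.
   Context: $U,V$ finite-dimensional over a field $\mathbb{K}$. $\mathcal{S}$ is $c$-LLD if for every $x\in U$, $\dim\{f\in\mathcal{S}\mid f(x)=0\}\geq c$; LLD means $1$-LLD. $\mathcal{S}$ is reduced if $\bigcap_{f\in\mathcal{S}}\ker f=\{0\}$ and $\sum_{f\in\mathcal{S}}\mathrm{im} f=V$. $\widehat{\mathcal{S}}:=\{f\mapsto f(x)\mid x\in U\}\subseteq\mathcal{L}(\mathcal{S},V)$. For an operator space $\mathcal{T}\subseteq\mathcal{L}(W,V)$: $\mathcal{T}$ is $d$-defective if $\dim\ker g\geq d$ for all $g\in\mathcal{T}$; its defectiveness index is the greatest such $d$; $\mathcal{T}$ is semi-primitive if it is reduced and there is no linear hyperplane $W'$ of $W$ such that $\{g_{|W'}\mid g\in\mathcal{T}\}$ is $d$-defective, $d$ being the defectiveness index of $\mathcal{T}$. *)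

From HB Require Import structures.
From mathcomp Require Import all_boot all_order all_algebra.
Set Implicit Arguments. Unset Strict Implicit. Unset Printing Implicit Defensive.
Import GRing.Theory.
Local Open Scope ring_scope.
Local Open Scope vspace_scope.

Section Defs.
Variable K : fieldType.

Definition evalAt (U V : vectType K) (x : U) : 'Hom('Hom(U, V), V) :=
  linfun (fun f : 'Hom(U, V) => f x).

Definition cLLD (U V : vectType K) (c : nat) (S : {vspace 'Hom(U, V)}) : Prop :=
  forall x : U, (c <= \dim (S :&: lker (evalAt V x)))%N.

Definition is_lld_index (U V : vectType K) (c : nat) (S : {vspace 'Hom(U, V)}) : Prop :=
  cLLD c S /\ (forall c', cLLD c' S -> (c' <= c)%N).

(* reduced: the kernels of S meet in {0}, and the images of S span V
   (i.e. the only subspace containing every im f, f in S, is V) *)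
Definition reduced (U V : vectType K) (S : {vspace 'Hom(U, V)}) : Prop :=
  (forall x : U, (forall f, f \in S -> f x = 0%R) -> x = 0%R) /\
  (forall Wv : {vspace V}, (forall f, f \in S -> (limg f <= Wv)%VS) -> Wv = fullv).

(* S-hat = { f |-> f x | x in U } inside L(S, V) *)
Definition hatS (U V : vectType K) (S : {vspace 'Hom(U, V)})
  : {vspace 'Hom(subvs_of S, V)} :=
  limg (linfun (fun x : U => linfun (fun f : subvs_of S => (vsval f) x))).

Definition defective (W V : vectType K) (d : nat) (T : {vspace 'Hom(W, V)}) : Prop :=
  forall g, g \in T -> (d <= \dim (lker g))%N.

Definition is_def_index (W V : vectType K) (d : nat) (T : {vspace 'Hom(W, V)}) : Prop :=
  defective d T /\ (forall d', defective d' T -> (d' <= d)%N).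

Definition restr (W V : vectType K) (W' : {vspace W}) (g : 'Hom(W, V))
  : 'Hom(subvs_of W', V) :=
  (g \o linfun (@vsval _ _ W'))%VF.

Definition semi_primitive (W V : vectType K) (T : {vspace 'Hom(W, V)}) : Prop :=
  reduced T /\
  forall d, is_def_index d T ->
  ~ (exists W' : {vspace W},
       (\dim W').+1 = \dim (fullv : {vspace W}) /\
       (forall g, g \in T -> (d <= \dim (lker (restr W' g)))%N)).

Definition minimal_cLLD (U V : vectType K) (c : nat) (S : {vspace 'Hom(U, V)}) : Prop :=
  cLLD c S /\
  forall T : {vspace 'Hom(U, V)}, (T <= S)%VS -> cLLD c T -> T = S.

End Defs.

From HB Require Import structures.
From mathcomp Require Import all_boot all_order all_algebra.
From mathcomp Require Import zify.
Set Implicit Arguments. Unset Strict Implicit.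
Import GRing.Theory.
Local Open Scope ring_scope.
Local Open Scope vspace_scope.

(* Let S <= L(U,V) and write hat x : S -> V for evaluation at x, so that
   hatS S = { hat x | x in U }.  The whole proof rests on a dictionary between
   subspaces W of S (viewed as the vector space subvs_of S) and subspaces
   T = incl(W) of L(U,V) contained in S:
   - the kernel of hat x restricted to W has the dimension of
     incl(W) :&: ker(ev_x), hence "hatS S restricted to W is d-defective"
     is the same as "incl(W) is d-LLD"; for W = S this identifies the
     defectiveness index of hatS S with the LLD index c of S;
   - S reduced implies hatS S reduced.
   Consequently hatS S admits a hyperplane of S on which it stays
   c-defective iff S has a proper c-LLD subspace: one direction takes the
   image of the hyperplane, the other enlarges the preimage of a proper
   c-LLD subspace to a hyperplane (c-LLD is inherited by larger spaces).
   Semi-primitivity of hatS S and minimality of S are the negations of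
   these two statements, which gives the theorem. *)

Section LinearAlgebra.
Variable K : fieldType.

(* Every proper subspace of a finite-dimensional space lies in a hyperplane:
   add to W0 a complement of a line inside a complement of W0. *)
Lemma hyperplane_sup (X : vectType K) (W0 : {vspace X}) :
  (\dim W0 < \dim (fullv : {vspace X}))%N ->
  exists W' : {vspace X}, (W0 <= W') /\ (\dim W').+1 = \dim (fullv : {vspace X}).
Proof.
move=> ltW0.
pose v := vpick W0^C.
have v_nz : v != 0%R.
  by rewrite vpick0 -dimv_eq0 dimv_compl; lia.
have vC : (<[v]> <= W0^C) by rewrite -memvE memv_pick.
pose H := W0^C :\: <[v]>.
have dimH : (\dim H).+1 = (\dim (fullv : {vspace X}) - \dim W0)%N.
  have := dimv_cap_compl W0^C <[v]>.
  by rewrite (capv_idPr vC) dim_vline v_nz dimv_compl -/H; lia.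
have W0H : W0 :&: H = 0%VS.
  apply/eqP; rewrite -subv0 -(capv_compl W0); exact: capvS (diffvSl _ _).
exists (W0 + H); split; first exact: addvSl.
by rewrite dimv_disjoint_sum //; lia.
Qed.

(* linfun f computes f whenever f is linear, even without a canonical
   linear structure on f. *)
Lemma linfunE (aT rT : vectType K) (f : aT -> rT) :
  linear f -> linfun f =1 f.
Proof.
move=> fL; pose lf : {linear aT -> rT} := HB.pack f (GRing.isLinear.Build _ _ _ _ f fL).
exact: (lfunE lf).
Qed.

Lemma limg_vsval (X : vectType K) (W : {vspace X}) :
  linfun (@vsval _ _ W) @: fullv = W.
Proof.
apply/vspaceP => w; apply/memv_imgP/idP => [[u _ ->] | wW].
  by rewrite lfunE subvsP.
by exists (vsproj W w); rewrite ?memvf // lfunE /= vsprojK.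
Qed.

Lemma dim_subvs (X : vectType K) (W : {vspace X}) :
  \dim (fullv : {vspace subvs_of W}) = \dim W.
Proof. exact: dimvf. Qed.

Lemma dim_lker_restr (W V : vectType K) (W' : {vspace W}) (g : 'Hom(W, V)) :
  \dim (lker (restr W' g)) = \dim (W' :&: lker g).
Proof.
have := limg_ker_dim g W'; have := limg_ker_dim (restr W' g) fullv.
rewrite capfv dim_subvs /restr limg_comp limg_vsval; lia.
Qed.

Lemma dim_cap_lker_comp (X Y Z : vectType K) (f : 'Hom(X, Y)) (h : 'Hom(Y, Z))
    (W : {vspace X}) :
  lker f = 0%VS -> \dim (W :&: lker (h \o f)%VF) = \dim (f @: W :&: lker h).
Proof.
move=> f_inj.
have dim_fW : \dim (f @: W) = \dim W by rewrite limg_dim_eq // f_inj capv0.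
have := limg_ker_dim (h \o f)%VF W; have := limg_ker_dim h (f @: W).
rewrite limg_comp; lia.
Qed.

Lemma def_index_unique (W V : vectType K) (T : {vspace 'Hom(W, V)})
    (d d' : nat) :
  is_def_index d T -> is_def_index d' T -> d = d'.
Proof. by move=> [Td Tmax] [Td' Tmax']; apply/eqP; rewrite eqn_leq Tmax' ?Tmax. Qed.

Lemma cLLD_subv (U V : vectType K) (c : nat) (T T' : {vspace 'Hom(U, V)}) :
  (T <= T')%VS -> cLLD c T -> cLLD c T'.
Proof. by move=> TT' Tc x; apply: leq_trans (Tc x) (dimvS (capvS TT' (subvv _))). Qed.
End LinearAlgebra.

Section HatS.
Variables (K : fieldType) (U V : vectType K) (S : {vspace 'Hom(U, V)}).

Lemma evalAtE (x : U) (f : 'Hom(U, V)) : evalAt V x f = f x.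
Proof. by rewrite linfunE // => a g h; rewrite add_lfunE scale_lfunE. Qed.

Definition inclS : 'Hom(subvs_of S, 'Hom(U, V)) := linfun vsval.

Lemma lker_inclS : lker inclS = 0%VS.
Proof. by apply/eqP/lker0P => f g; rewrite !lfunE; apply: subvs_inj. Qed.

Lemma dim_inclS (W : {vspace subvs_of S}) : \dim (inclS @: W) = \dim W.
Proof. by rewrite limg_dim_eq // lker_inclS capv0. Qed.

Lemma inclS_full : inclS @: fullv = S.
Proof. exact: limg_vsval. Qed.

Lemma inclS_sub (W : {vspace subvs_of S}) : (inclS @: W <= S)%VS.
Proof. by rewrite -[X in (_ <= X)%VS]inclS_full limgS ?subvf. Qed.

Lemma subv_inclS (T : {vspace 'Hom(U, V)}) :
  (T <= S)%VS -> exists W : {vspace subvs_of S}, inclS @: W = T.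
Proof.
move=> TS; exists (linfun (vsproj S) @: T); rewrite -limg_comp.
rewrite (eq_in_limg (g := \1%VF)) ?lim1g // => f fT.
by rewrite comp_lfunE !lfunE /= vsprojK // (subvP TS).
Qed.

Definition hat (x : U) : 'Hom(subvs_of S, V) := linfun (fun f : subvs_of S => vsval f x).

Lemma hatE (x : U) (f : subvs_of S) : hat x f = vsval f x.
Proof. by rewrite linfunE // => a g h; rewrite linearP /= add_lfunE scale_lfunE. Qed.

Lemma hat_comp (x : U) : hat x = (evalAt V x \o inclS)%VF.
Proof. by apply/lfunP => f; rewrite comp_lfunE evalAtE hatE lfunE. Qed.

Lemma mem_hatS (g : 'Hom(subvs_of S, V)) : g \in hatS S <-> exists x, g = hat x.
Proof.
have hatL : linfun (fun x : U => hat x) =1 hat.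
  apply: linfunE => a x y; apply/lfunP => f.
  by rewrite add_lfunE scale_lfunE !hatE linearP.
rewrite /hatS -/hat; split=> [/memv_imgP [x _ ->] | [x ->]].
  by exists x; rewrite hatL.
by rewrite -hatL memv_img ?memvf.
Qed.

Lemma dim_lker_restr_hat (W : {vspace subvs_of S}) (x : U) :
  \dim (lker (restr W (hat x))) = \dim (inclS @: W :&: lker (evalAt V x)).
Proof. by rewrite dim_lker_restr hat_comp dim_cap_lker_comp // lker_inclS. Qed.

Lemma restr_hatS_defective (W : {vspace subvs_of S}) (d : nat) :
  (forall g, g \in hatS S -> (d <= \dim (lker (restr W g)))%N) <-> cLLD d (inclS @: W).
Proof.
split=> [Wd x | Wc g /mem_hatS [x ->]]; last by rewrite dim_lker_restr_hat.
by rewrite -dim_lker_restr_hat; apply: Wd; apply/mem_hatS; exists x.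
Qed.

Lemma hatS_defective (d : nat) : defective d (hatS S) <-> cLLD d S.
Proof.
have -> : cLLD d S <-> cLLD d (inclS @: fullv) by rewrite inclS_full.
rewrite -restr_hatS_defective.
by split=> Hd g gT; have := Hd g gT; rewrite dim_lker_restr capfv.
Qed.

Lemma hatS_reduced : reduced S -> reduced (hatS S).
Proof.
move=> [_ Simg]; split=> [f f0 | Wv Wv_img].
  apply/subvs_inj/lfunP => x; rewrite linear0 zero_lfunE -hatE.
  by apply: f0; apply/mem_hatS; exists x.
apply: Simg => f fS; apply/subvP => _ /memv_imgP [x _ ->].
have hatx : hat x \in hatS S by apply/mem_hatS; exists x.
apply: (subvP (Wv_img _ hatx)).
by rewrite -[f](vsprojK fS) -hatE memv_img ?memvf.
Qed.

Lemma hatS_hyperplane_iff (c : nat) :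
  (exists W' : {vspace subvs_of S},
     (\dim W').+1 = \dim (fullv : {vspace subvs_of S}) /\
     (forall g, g \in hatS S -> (c <= \dim (lker (restr W' g)))%N))
  <-> (exists T : {vspace 'Hom(U, V)}, [/\ (T <= S)%VS, T != S & cLLD c T]).
Proof.
split=> [[W' [dimW' W'c]] | [T [TS TneS Tc]]].
  exists (inclS @: W'); split; [exact: inclS_sub | | exact/restr_hatS_defective].
  apply/eqP => eqS; have := dim_inclS W'; rewrite eqS; move: dimW'.
  by rewrite dim_subvs => <- /esym /n_Sn.
have [W defT] := subv_inclS TS.
have ltW : (\dim W < \dim (fullv : {vspace subvs_of S}))%N.
  by rewrite dim_subvs -(dim_inclS W) defT (ltn_leqif (dimv_leqif_eq TS)).
have [W' [WW' dimW']] := hyperplane_sup ltW.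
exists W'; split=> //; apply/restr_hatS_defective.
by apply: cLLD_subv Tc; rewrite -defT limgS.
Qed.

End HatS.

Theorem mainTheorem11 (K : fieldType) (U V : vectType K)
    (S : {vspace 'Hom(U, V)}) (c : nat) :
  reduced S -> cLLD 1 S -> is_lld_index c S ->
  (semi_primitive (hatS S) <-> minimal_cLLD c S).
Proof.
move=> Sred _ [Sc Smax].
have hat_idx : is_def_index c (hatS S).
  by split=> [|d /hatS_defective]; [exact/hatS_defective | exact: Smax].
split=> [[_ no_hyperplane] | [_ Smin]].
  split=> // T TS Tc; case: (eqVneq T S) => // TneS; exfalso.
  by apply: (no_hyperplane c hat_idx); apply/hatS_hyperplane_iff; exists T.
split; first exact: hatS_reduced.
move=> d /(def_index_unique hat_idx) <- /hatS_hyperplane_iff [T [TS TneS Tc]].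
by rewrite (Smin T TS Tc) eqxx in TneS.
Qed.
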